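(* Let $V$ be a finite nonempty set and $f:\{0,1\}^V\to\{0,1\}^V$. The conjugate of every subnetwork of $f$ is a bijection if and only if $f$ has no even-self-dual and no odd-self-dual subnetwork.
   Context: For $x,y\in\{0,1\}^V$, $x\oplus y$ is componentwise addition mod 2, $1$ denotes the all-ones point, and $\|x\|$ is the number of components of $x$ equal to $1$; $x$ is even (odd) if $\|x\|$ is even (odd). The conjugate of a network $g$ on $W$ is $\tilde g(x)=g(x)\oplus x$. For a nonempty $I\subseteq V$ and $z\in\{0,1\}^{V\setminus I}$, the subnetwork of $f$ induced by $z$ is the network $h:\{0,1\}^I\to\{0,1\}^I$ with $h(x|_I)=f(x)|_I$ for all $x\in\{0,1\}^V$ whose restriction to $V\setminus I$ equals $z$ ($f$ is a subnetwork of itself). A network $g$ on $W$ is self-dual if $g(x\oplus 1)=g(x)\oplus 1$ for all $x$; even (odd) if $\tilde g(\{0,1\}^W)$ is exactly the set of even (odd) points of $\{0,1\}^W$; even-self-dual (odd-self-dual) if both even (odd) and self-dual. *)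

From mathcomp Require Import all_boot.
Set Implicit Arguments. Unset Strict Implicit. Unset Printing Implicit Defensive.

Definition point (W : finType) := {ffun W -> bool}.
Definition network (W : finType) := point W -> point W.

Definition xorp (W : finType) (x y : point W) : point W := [ffun w => x w (+) y w].
Definition ones (W : finType) : point W := [ffun _ => true].
Definition weight (W : finType) (x : point W) : nat := #|[pred w | x w]|.
Definition even_pt (W : finType) (x : point W) : bool := ~~ odd (weight x).
Definition odd_pt (W : finType) (x : point W) : bool := odd (weight x).

Definition conjugate (W : finType) (g : network W) : network W :=
  fun x => xorp (g x) x.

Definition self_dual (W : finType) (g : network W) : Prop :=
  forall x, g (xorp x (ones W)) = xorp (g x) (ones W).

Definition even_net (W : finType) (g : network W) : Prop :=
  forall y : point W, (exists x, conjugate g x = y) <-> even_pt y.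
Definition odd_net (W : finType) (g : network W) : Prop :=
  forall y : point W, (exists x, conjugate g x = y) <-> odd_pt y.

Definition even_self_dual (W : finType) (g : network W) : Prop :=
  even_net g /\ self_dual g.
Definition odd_self_dual (W : finType) (g : network W) : Prop :=
  odd_net g /\ self_dual g.

Definition elts (V : finType) (A : {set V}) : finType := {v : V | v \in A}.

(* The point x of {0,1}^V with x|_I = y and x|_{V\I} = z. *)
Definition glue (V : finType) (I : {set V}) (y : point (elts I))
  (z : point (elts (~: I))) : point V :=
  [ffun v => match @insub V (fun v => v \in I) _ v with
             | Some u => y u
             | None => match @insub V (fun v => v \in ~: I) _ v with
                       | Some u => z u
                       | None => false
                       end
             end].

Definition restr (V : finType) (I : {set V}) (x : point V) : point (elts I) :=
  [ffun u : elts I => x (val u)].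

Definition subnetwork (V : finType) (f : network V) (I : {set V})
  (z : point (elts (~: I))) : network (elts I) :=
  fun y => restr I (f (glue y z)).

From mathcomp Require Import all_boot zify.
Set Implicit Arguments. Unset Strict Implicit. Unset Printing Implicit Defensive.

(* Let g be the conjugate of the subnetwork on I. Inductively, every subnetwork
   on I minus one vertex i has a bijective conjugate, so for each bit b the map
   x |-> g(x) off i is a bijection from {x | x_i = b} onto the points off i.
   Hence the fibres of g over two neighbouring points of the cube have sizes
   summing to 2, and two distinct points with the same image are antipodal.
   If g is not injective, some fibre has size 2, so every fibre has size 2 or 0
   according to the parity of its point: g maps onto exactly the even or the odd
   points and g(x + 1) = g(x), which is self-duality of the subnetwork.
   Conversely, a bijective conjugate reaches points of both parities. *)

Section Cube.
Variable W : finType.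

Definition flip (i : W) (y : point W) : point W :=
  [ffun w => if w == i then ~~ y w else y w].

Lemma flip_neq (i : W) (y : point W) : flip i y != y.
Proof. by apply/eqP => /ffunP /(_ i); rewrite ffunE eqxx; case: (y i). Qed.

Lemma eq_off_flip (i : W) (a y : point W) :
  (forall j, j != i -> a j = y j) <-> a = y \/ a = flip i y.
Proof.
split=> [agree | [-> // | -> j /negbTE ji]]; last by rewrite ffunE ji.
have [ai | ai] := eqVneq (a i) (y i); [left | right]; apply/ffunP => j;
  rewrite ?ffunE; (have [-> | /agree //] := eqVneq j i); rewrite ?eqxx //.
by move: ai; case: (a i); case: (y i).
Qed.

Lemma weight_flip (i : W) (y : point W) :
  weight (flip i y) = if y i then (weight y).-1 else (weight y).+1.
Proof.
have off_i : [predD1 [pred w | flip i y w] & i] =i [predD1 [pred w | y w] & i].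
  by move=> w; rewrite !inE ffunE; case: eqP.
rewrite /weight (cardD1 i) [in RHS](cardD1 i) (eq_card off_i) !inE ffunE eqxx.
by case: (y i).
Qed.

Lemma odd_weight_flip (i : W) (y : point W) :
  odd (weight (flip i y)) = ~~ odd (weight y).
Proof.
rewrite weight_flip; case yi: (y i) => //=.
have: 0 < weight y by apply/card_gt0P; exists i; rewrite inE.
by case: (weight y) => //= n _; rewrite negbK.
Qed.

Lemma exists_coord_neq (x y : point W) : x != y -> exists i, x i != y i.
Proof.
move=> neq; apply/existsP; apply: contraNT neq => /existsPn same.
by apply/eqP/ffunP => w; apply/eqP/negPn/same.
Qed.

Lemma flip_invariant_const (T : Type) (F : point W -> T) :
  (forall i y, F (flip i y) = F y) -> forall y y', F y = F y'.
Proof.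
move=> Finv y y'; have [n] := ubnP (weight (xorp y y')); elim: n y => // n IH y.
case: (eqVneq y y') => [-> // | neq] lt_n.
have [i diff_i] := exists_coord_neq neq.
have d_i : xorp y y' i by rewrite ffunE; move: diff_i; case: (y i); case: (y' i).
have d_pos : 0 < weight (xorp y y') by apply/card_gt0P; exists i.
have flip_d : xorp (flip i y) y' = flip i (xorp y y').
  by apply/ffunP => w; rewrite !ffunE; case: (w == i); rewrite ?negbK ?negb_add.
by rewrite -(Finv i y); apply: IH; rewrite flip_d weight_flip d_i; lia.
Qed.

End Cube.

Section SliceBijective.
Variables (W : finType) (g : point W -> point W).

Hypothesis slice_inj : forall (i : W) (x x' : point W),
  x i = x' i -> (forall j, j != i -> g x j = g x' j) -> x = x'.
Hypothesis slice_surj : forall (i : W) (b : bool) (y : point W),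
  exists x : point W, x i = b /\ forall j, j != i -> g x j = y j.

Definition fibre_size (y : point W) : nat := #|[set x | g x == y]|.

Lemma fibre_size_gt0 (y : point W) : (exists x, g x = y) <-> 0 < fibre_size y.
Proof.
rewrite card_gt0; split=> [[x gx] | /set0Pn[x]]; last by rewrite inE => /eqP; exists x.
by apply/set0Pn; exists x; rewrite inE gx.
Qed.

Lemma collision_antipodal (x x' : point W) :
  g x = g x' -> x != x' -> x' = xorp x (ones W).
Proof.
move=> gxx' neq; apply/ffunP => i; rewrite !ffunE addbT.
apply/eqP; apply: contraNT neq => /negPn same_i.
apply/eqP/(slice_inj (i := i)) => [| j _]; last by rewrite gxx'.
by move: same_i; case: (x i); case: (x' i).
Qed.

Lemma fibre_size_flip (i : W) (y : point W) :
  fibre_size y + fibre_size (flip i y) = 2.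
Proof.
have [x0 [x0_i gx0]] := slice_surj i false y.
have [x1 [x1_i gx1]] := slice_surj i true y.
have in_fibres x :
    (g x == y) || (g x == flip i y) <-> forall j, j != i -> g x j = y j.
  by rewrite eq_off_flip; split=> [/orP[] /eqP | [] ->]; rewrite ?eqxx ?orbT; auto.
have fibres : [set x | g x == y] :|: [set x | g x == flip i y] = [set x0; x1].
  apply/setP => x; rewrite !inE; apply/idP/idP; last first.
    by case/orP => /eqP ->; apply/in_fibres.
  move/in_fibres => gx.
  have same (x' : point W) :
      x i = x' i -> (forall j, j != i -> g x' j = y j) -> x = x'.
    by move=> xi gx'; apply: slice_inj xi _ => j ji; rewrite gx ?gx'.
  by case xi: (x i); apply/orP; [right | left]; apply/eqP/same; rewrite ?xi.
have disjoint : [set x | g x == y] :&: [set x | g x == flip i y] = set0.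
  apply/setP => x; rewrite !inE; apply/negP => /andP[/eqP gx].
  by rewrite gx eq_sym (negbTE (flip_neq _ _)).
rewrite /fibre_size -cardsUI fibres disjoint cards0 cards2 addn0.
by have -> : x0 != x1 by apply/eqP => x01; move: x0_i; rewrite x01 x1_i.
Qed.

Lemma fibre_size_parity (i0 : W) (y y' : point W) :
  fibre_size y = if odd (weight y) == odd (weight y') then fibre_size y'
                 else 2 - fibre_size y'.
Proof.
pose F y1 := if odd (weight y1) then 2 - fibre_size y1 else fibre_size y1.
have F_flip i y1 : F (flip i y1) = F y1.
  have := fibre_size_flip i y1; rewrite /F odd_weight_flip.
  by case: (odd (weight y1)) => /=; lia.
have := flip_invariant_const F_flip y y'; rewrite /F.
have := fibre_size_flip i0 y; have := fibre_size_flip i0 y'.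
by case: (odd (weight y)); case: (odd (weight y')) => /=; lia.
Qed.

Lemma collision_structure (x x' : point W) : g x = g x' -> x != x' ->
  (forall u, g (xorp u (ones W)) = g u) /\
  forall y, (exists u, g u = y) <-> odd (weight y) = odd (weight (g x)).
Proof.
move=> gxx' neq; have [i0 _] := exists_coord_neq neq.
have full : fibre_size (g x) = 2.
  have := fibre_size_flip i0 (g x).
  have : #|[set x; x']| <= fibre_size (g x).
    by apply/subset_leq_card/subsetP => u; rewrite !inE => /orP[] /eqP ->; rewrite ?gxx'.
  by rewrite cards2 neq; lia.
have fibre_y y : fibre_size y = if odd (weight y) == odd (weight (g x)) then 2 else 0.
  by rewrite (fibre_size_parity i0 y (g x)) full; case: ifP.
have image y : (exists u, g u = y) <-> odd (weight y) = odd (weight (g x)).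
  by rewrite fibre_size_gt0 fibre_y; case: eqP.
split=> // u.
have : #|[set v | g v == g u] :\ u| = 1.
  have /image par := ex_intro (fun v => g v = g u) u erefl.
  by have := fibre_y (g u); rewrite par eqxx /fibre_size (cardsD1 u) inE eqxx; lia.
case/eqP/cards1P => u' /setP /(_ u'); rewrite !inE eqxx => /andP[u'u /eqP gu'].
by rewrite -(collision_antipodal (esym gu')) // eq_sym.
Qed.

End SliceBijective.

Lemma restrE (V : finType) (A : {set V}) (w : point V) (u : elts A) :
  restr A w u = w (val u).
Proof. exact: ffunE. Qed.

Section GlueRestrict.
Variables (V : finType) (I : {set V}).
Implicit Types (y : point (elts I)) (z : point (elts (~: I))).

Lemma glue_val y z (u : elts I) : glue y z (val u) = y u.
Proof. by rewrite ffunE valK. Qed.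

Lemma glue_valC y z (u : elts (~: I)) : glue y z (val u) = z u.
Proof. by rewrite ffunE insubF ?valK //; apply/negbTE; have := valP u; rewrite inE. Qed.

Lemma restr_glue y z : restr I (glue y z) = y.
Proof. by apply/ffunP => u; rewrite ffunE glue_val. Qed.

Lemma restrC_glue y z : restr (~: I) (glue y z) = z.
Proof. by apply/ffunP => u; rewrite ffunE glue_valC. Qed.

Lemma glue_restr (w : point V) : glue (restr I w) (restr (~: I) w) = w.
Proof.
apply/ffunP => v; have [vI | vI] := boolP (v \in I).
  by rewrite (glue_val _ _ (Sub v vI)) ffunE.
have vIC : v \in ~: I by rewrite inE.
by rewrite (glue_valC _ _ (Sub v vIC)) ffunE.
Qed.
End GlueRestrict.

Lemma bijective_of_card0 (W : finType) : #|W| = 0 -> forall g : point W -> point W, bijective g.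
Proof.
move=> /card0_eq W0 g; have all_eq (x y : point W) : x = y.
  by apply/ffunP => w; have := W0 w; rewrite inE.
by exists g => x; apply: all_eq.
Qed.

Section Networks.
Variables (W : finType) (h : network W).

Lemma self_dual_conjugate :
  (forall x, conjugate h (xorp x (ones W)) = conjugate h x) -> self_dual h.
Proof.
move=> conj_antipodal x; apply/ffunP => w.
have := congr1 (fun p : point W => p w) (conj_antipodal x); rewrite !ffunE.
by case: (h _ w); case: (h x w); case: (x w).
Qed.

Lemma bijective_conjugate_not_odd : bijective (conjugate h) -> ~ odd_net h.
Proof.
move=> [inv _ conjK] odd_h.
have := (odd_h [ffun=> false]).1 (ex_intro _ _ (conjK _)).
by rewrite /odd_pt (_ : weight _ = 0) //; apply: eq_card0 => w; rewrite !inE ffunE.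
Qed.

Lemma bijective_conjugate_not_even (w0 : W) : bijective (conjugate h) -> ~ even_net h.
Proof.
move=> [inv _ conjK] even_h.
have := (even_h [ffun w => w == w0]).1 (ex_intro _ _ (conjK _)).
rewrite /even_pt (_ : weight _ = 1) // /weight -(card1 w0).
by apply: eq_card => w; rewrite !inE ffunE.
Qed.
End Networks.

Section Slices.
Variables (V : finType) (f : network V).

Lemma conjugate_subnetwork_restr (I : {set V}) (w : point V) :
  conjugate (subnetwork f (restr (~: I) w)) (restr I w) = restr I (conjugate f w).
Proof. by rewrite /conjugate /subnetwork glue_restr; apply/ffunP => u; rewrite !ffunE. Qed.

Lemma conjugate_subnetworkE (I : {set V}) (z : point (elts (~: I))) (x : point (elts I)) :
  conjugate (subnetwork f z) x = restr I (conjugate f (glue x z)).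
Proof. by rewrite -conjugate_subnetwork_restr restr_glue restrC_glue. Qed.

Variables (I : {set V}) (z : point (elts (~: I))) (i : elts I).
Let J := I :\ val i.
Let g := conjugate (subnetwork f z).
Hypothesis bijJ : forall z' : point (elts (~: J)), bijective (conjugate (subnetwork f z')).

Lemma val_in_slice (j : elts I) : (val j \in J) = (j != i).
Proof. by rewrite in_setD1 (valP j) andbT (inj_eq val_inj). Qed.

Lemma slice_in_set (v : V) : v \in J -> v \in I.
Proof. by rewrite in_setD1 => /andP[]. Qed.

Lemma slice_injective (x x' : point (elts I)) :
  x i = x' i -> (forall j, j != i -> g x j = g x' j) -> x = x'.
Proof.
move=> xx'_i agree; set w := glue x z; set w' := glue x' z.
have outside : restr (~: J) w = restr (~: J) w'.
  apply/ffunP => u; rewrite !restrE /w /w'; have [vI | vI] := boolP (val u \in I).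
    have ui : Sub (val u) vI = i :> elts I.
      by apply/eqP; rewrite -[_ == _]negbK -val_in_slice; have := valP u; rewrite inE.
    by rewrite !(glue_val _ _ (Sub (val u) vI)) ui.
  have vIC : val u \in ~: I by rewrite inE.
  by rewrite !(glue_valC _ _ (Sub (val u) vIC)).
have inside : restr J (conjugate f w) = restr J (conjugate f w').
  apply/ffunP => u; have uI := slice_in_set (valP u).
  have /agree : Sub (val u) uI != i by rewrite -val_in_slice; exact: valP u.
  by rewrite /g !conjugate_subnetworkE !ffunE.
have [h hK _] := bijJ (restr (~: J) w).
have eqJ : restr J w = restr J w'.
  apply: (can_inj hK).
  by rewrite conjugate_subnetwork_restr outside conjugate_subnetwork_restr inside.
apply/ffunP => j; have [-> // | ji] := eqVneq j i.
have jJ : val j \in J by rewrite val_in_slice.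
have := congr1 (fun p : point (elts J) => p (Sub (val j) jJ)) eqJ.
by rewrite !restrE /= /w /w' !glue_val.
Qed.

Lemma slice_surjective (b : bool) (y : point (elts I)) :
  exists x : point (elts I), x i = b /\ forall j, j != i -> g x j = y j.
Proof.
pose z' := restr (~: J) (glue [ffun=> b] z).
have [h _ hK] := bijJ z'.
set u := h (restr J (glue y z)); set w := glue u z'.
have w_out : restr (~: I) w = z.
  apply/ffunP => v; have vI : val v \notin I by have := valP v; rewrite inE.
  have vJC : val v \in ~: J by rewrite inE; apply: contra vI; apply: slice_in_set.
  by rewrite restrE /w (glue_valC _ _ (Sub (val v) vJC)) /z' restrE (glue_valC _ _ v).
exists (restr I w); split.
  have iJC : val i \in ~: J by rewrite inE val_in_slice eqxx.
  by rewrite restrE /w (glue_valC _ _ (Sub (val i) iJC)) /z' restrE (glue_val _ _ i) ffunE.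
move=> j ji; have jJ : val j \in J by rewrite val_in_slice.
rewrite /g conjugate_subnetworkE -[X in glue _ X]w_out glue_restr restrE.
have := congr1 (fun p : point (elts J) => p (Sub (val j) jJ)) (hK (restr J (glue y z))).
by rewrite conjugate_subnetworkE -/w !restrE /= (glue_val _ _ j).
Qed.
End Slices.

Lemma subnetwork_conjugate_bijective (V : finType) (f : network V) (I : {set V})
    (z : point (elts (~: I))) :
  (forall v, v \in I -> forall z' : point (elts (~: (I :\ v))),
     bijective (conjugate (subnetwork f z'))) ->
  [\/ bijective (conjugate (subnetwork f z)), even_self_dual (subnetwork f z)
    | odd_self_dual (subnetwork f z)].
Proof.
move=> bij_slices; set g := conjugate _.
have [/injectiveP g_inj | /injectivePn [x [x' neq gxx']]] := boolP (injectiveb g).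
  by constructor 1; apply: injF_bij.
have [antipodal image] := collision_structure
  (fun i => slice_injective (bij_slices (val i) (valP i)))
  (fun i => slice_surjective z (bij_slices (val i) (valP i))) gxx' neq.
have sd := self_dual_conjugate antipodal.
case par: (odd (weight (g x))); [constructor 3 | constructor 2]; split=> // y;
  by rewrite image par /odd_pt /even_pt; case: (odd _).
Qed.

Theorem corollary1 (V : finType) (HV : 0 < #|V|) (f : network V) :
  (forall (I : {set V}) (z : point (elts (~: I))),
      I != set0 -> bijective (conjugate (subnetwork f z)))
  <->
  ~ (exists (I : {set V}) (z : point (elts (~: I))),
        I != set0 /\
        (even_self_dual (subnetwork f z) \/ odd_self_dual (subnetwork f z))).
Proof.
split=> [all_bij [I [z [nI [[even_h _] | [odd_h _]]]]] | no_self_dual I z _].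
- have [v vI] := set0Pn _ nI.
  exact: bijective_conjugate_not_even (Sub v vI : elts I) (all_bij I z nI) even_h.
- exact: bijective_conjugate_not_odd (all_bij I z nI) odd_h.
have [n] := ubnP #|I|; elim: n I z => // n IH I z ltI.
have [I0 | nI] := eqVneq I set0.
  by apply: bijective_of_card0; rewrite card_sig I0; apply: eq_card0 => v; rewrite !inE.
have slices v : v \in I -> forall z' : point (elts (~: (I :\ v))),
    bijective (conjugate (subnetwork f z')).
  by move=> vI z'; apply: IH; move: ltI; rewrite (cardsD1 v I) vI.
case: (subnetwork_conjugate_bijective z slices) => // self_dual_h.
all: by case: no_self_dual; exists I, z; auto.
Qed.
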